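(* Let $0<q<1$ and let $n,k$ be integers with $1\le n\le k$. Then \[ \sum_{\substack{s_1,\dots,s_n\ge1\\ s_1+\cdots+s_n=k}}\zeta[s_1+1,s_2,\dots,s_n] = \zeta[k+1], \] the sum being over all $n$-tuples of positive integers with sum $k$.
   Context: Fix $0<q<1$. For real $x$, $[x]_q := (1-q^x)/(1-q)$. For positive integers $s_1,\dots,s_N$ with $s_1>1$, $\zeta[s_1,\dots,s_N] := \sum_{k_1>\cdots>k_N>0}\prod_{j=1}^N q^{(s_j-1)k_j}/[k_j]_q^{s_j}$ (sum over positive integers). *)

From Stdlib Require Import Reals List Arith.
From Coquelicot Require Import Coquelicot.
Import ListNotations.
Open Scope R_scope.

Definition qint (q : R) (x : nat) : R := (1 - q ^ x) / (1 - q).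

Definition qterm (q : R) (s k : nat) : R := q ^ ((s - 1) * k) / (qint q k) ^ s.

(* truncated sum over M >= k_1 > k_2 > ... > k_N > 0 for index list [s_1;...;s_N] *)
Fixpoint qzeta_trunc (q : R) (s : list nat) (M : nat) : R :=
  match s with
  | [] => 1
  | s1 :: rest => sum_f_R0 (fun j => qterm q s1 (S j) * qzeta_trunc q rest j) (M - 1)
                  * (if (M =? 0)%nat then 0 else 1)
  end.

(* zeta[s_1,...,s_N] = lim_{M->oo} of the truncated sums (terms are >= 0, so
   this is the value of the series) *)
Definition qzeta (q : R) (s : list nat) : R := real (Lim_seq (qzeta_trunc q s)).

Definition qzeta_converges (q : R) (s : list nat) : Prop :=
  ex_finite_lim_seq (qzeta_trunc q s).

Fixpoint bounded_lists (n k : nat) : list (list nat) :=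
  match n with
  | O => [[]]
  | S n' => flat_map (fun a => map (cons a) (bounded_lists n' k)) (seq 1 k)
  end.

Definition list_sum_nat (l : list nat) : nat := fold_right Nat.add 0%nat l.

Definition compositions (n k : nat) : list (list nat) :=
  filter (fun l => Nat.eqb (list_sum_nat l) k) (bounded_lists n k).

Definition bump_first (l : list nat) : list nat :=
  match l with [] => [] | a :: r => S a :: r end.

(* Introduce a variable [0 < t < 1] and sum both sides over the weight [n + 1 + r] with the
   factor [t^r]. Writing [x_k = q^k / [k]_q] and [D(k) = [k]_q - t q^k], the geometric series
   in each exponent give
     [sum_r t^r (left side)  = sum_(k_1 > ... > k_n > 0) x_(k_1) / (D(k_1) ... D(k_n))],
     [sum_r t^r zeta[n+1+r] = sum_(k > 0) x_k^n / D(k)].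
   These agree: the kernel [C(m, l) = q^(m l) P(m) P(l) / P(m + l)] with [P(m) = D(1)...D(m)]
   is symmetric, [C(0, l) = 1], and [sum_(i > m) C(i, l) / D(i) = x_l C(m, l)] by telescoping.
   Iterating gives [sum_(i > k_2 > ... > k_n > 0) C(i, l) / (D(i) D(k_2) ... D(k_n)) = x_l^n];
   dividing by [D(l)] and summing over [l] gives the right-hand generating function, while
   summing over [l] first, the symmetry of [C] and the case [m = 0] of the telescoping identity
   produce the factor [x_i] of the left-hand one. All terms are nonnegative, so Tonelli justifies the interchanges, and
   comparing coefficients of [t^r] gives the formula. *)

From Stdlib Require Import Reals List Lra Lia.
From Coquelicot Require Import Coquelicot.
Import ListNotations.
Open Scope R_scope.

(** * Finite sums *)

Fixpoint sum_first (f : nat -> R) (n : nat) : R :=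
  match n with O => 0 | S m => sum_first f m + f m end.

Lemma sum_n_sum_first (f : nat -> R) (n : nat) : sum_n f n = sum_first f (S n).
Proof.
  induction n as [|n IH]; [rewrite sum_O; simpl; lra|].
  rewrite sum_Sn, IH. simpl. unfold plus. simpl. lra.
Qed.

Lemma sum_f_R0_sum_first (f : nat -> R) (n : nat) : sum_f_R0 f n = sum_first f (S n).
Proof. induction n as [|n IH]; simpl in *; [lra|]. rewrite IH. reflexivity. Qed.

Lemma sum_first_ext (f g : nat -> R) (n : nat) :
  (forall i, (i < n)%nat -> f i = g i) -> sum_first f n = sum_first g n.
Proof. induction n; intros H; simpl; [reflexivity|]. rewrite IHn, H; auto. Qed.

Lemma sum_first_plus (f g : nat -> R) (n : nat) :
  sum_first (fun i => f i + g i) n = sum_first f n + sum_first g n.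
Proof. induction n; simpl; lra. Qed.

Lemma sum_first_scal (c : R) (f : nat -> R) (n : nat) :
  sum_first (fun i => c * f i) n = c * sum_first f n.
Proof. induction n; simpl; lra. Qed.

Lemma sum_first_nonneg (f : nat -> R) (n : nat) : (forall i, 0 <= f i) -> 0 <= sum_first f n.
Proof. intros H; induction n; simpl; [lra|]. specialize (H n). lra. Qed.

Lemma sum_first_le (f g : nat -> R) (n : nat) :
  (forall i, f i <= g i) -> sum_first f n <= sum_first g n.
Proof. intros H; induction n; simpl; [lra|]. specialize (H n). lra. Qed.

Lemma sum_first_zero (f : nat -> R) (n : nat) :
  (forall i, (i < n)%nat -> f i = 0) -> sum_first f n = 0.
Proof. induction n; intros H; simpl; [reflexivity|]. rewrite IHn, H; auto; lra. Qed.

Lemma sum_first_swap (f : nat -> nat -> R) (n m : nat) :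
  sum_first (fun i => sum_first (f i) m) n = sum_first (fun j => sum_first (fun i => f i j) n) m.
Proof.
  induction n as [|n IH]; simpl.
  - symmetry. apply sum_first_zero. reflexivity.
  - rewrite IH, <- sum_first_plus. reflexivity.
Qed.

Lemma sum_first_add (f : nat -> R) (n m : nat) :
  sum_first f (n + m) = sum_first f n + sum_first (fun i => f (n + i)%nat) m.
Proof.
  induction m as [|m IH]; simpl; [rewrite Nat.add_0_r; lra|].
  rewrite Nat.add_succ_r. simpl. rewrite IH. lra.
Qed.

Lemma sum_first_Sl (f : nat -> R) (n : nat) :
  sum_first f (S n) = f 0%nat + sum_first (fun i => f (S i)) n.
Proof. induction n as [|n IH]; simpl in *; [lra|]. rewrite IH. lra. Qed.

Lemma sum_first_split_zero (f : nat -> R) (n m : nat) : (n <= m)%nat ->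
  (forall i, (n <= i < m)%nat -> f i = 0) -> sum_first f m = sum_first f n.
Proof.
  intros Hnm H. replace m with (n + (m - n))%nat by lia. rewrite sum_first_add.
  rewrite (sum_first_zero (fun i => f (n + i)%nat)); [lra|]. intros i Hi. apply H. lia.
Qed.

Lemma pow_le1 (x : R) (n : nat) : 0 <= x <= 1 -> x ^ n <= 1.
Proof. intros Hx. rewrite <- (pow1 n). apply pow_incr. exact Hx. Qed.

Lemma pow_le_pow_decr (x : R) (m n : nat) : 0 <= x <= 1 -> (m <= n)%nat -> x ^ n <= x ^ m.
Proof.
  intros Hx Hmn. replace n with (m + (n - m))%nat by lia. rewrite pow_add.
  pose proof (pow_le1 x (n - m) Hx). pose proof (pow_le x m ltac:(lra)). nra.
Qed.

Lemma sum_first_telescope (f : nat -> R) (n : nat) :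
  sum_first (fun i => f (S i) - f i) n = f n - f 0%nat.
Proof. induction n as [|n IH]; simpl; [ring|]. rewrite IH. ring. Qed.

(** * Series *)

Lemma is_series_lim (a : nat -> R) (l : R) : is_series a l <-> is_lim_seq (sum_n a) l.
Proof. split; intros H; exact H. Qed.

Lemma is_series_sum_first_lim (a : nat -> R) (l : R) :
  is_series a l -> is_lim_seq (fun n => sum_first a n) l.
Proof.
  intros Ha. apply is_lim_seq_incr_1.
  apply (is_lim_seq_ext (sum_n a)); [intros n; apply sum_n_sum_first|exact Ha].
Qed.

(* Specialisations to [R], so that [apply] unifies with real products and the
   extensionality side goals are equations in [R] that [ring] recognises. *)
Lemma is_series_ext_R (a b : nat -> R) (l : R) :
  (forall n, a n = b n) -> is_series a l -> is_series b l.
Proof. exact (is_series_ext a b l). Qed.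

Lemma is_series_Rmult_l (c : R) (a : nat -> R) (l : R) :
  is_series a l -> is_series (fun n => c * a n) (c * l).
Proof. exact (is_series_scal_l c a l). Qed.

Lemma is_series_finite (a : nat -> R) (n : nat) :
  (forall j, (n <= j)%nat -> a j = 0) -> is_series a (sum_first a n).
Proof.
  intros H. apply is_series_lim, (proj2 (is_lim_seq_incr_n _ n _)).
  apply (is_lim_seq_ext (fun _ => sum_first a n)); [|apply is_lim_seq_const].
  intros k. rewrite sum_n_sum_first. symmetry. apply sum_first_split_zero; [lia|].
  intros i Hi. apply H. lia.
Qed.

Lemma is_series_zero : is_series (fun _ => 0) 0.
Proof. exact (is_series_finite (fun _ => 0) 0 (fun _ _ => eq_refl)). Qed.

Lemma is_series_sum_first (f : nat -> nat -> R) (l : nat -> R) (N : nat) :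
  (forall j, is_series (f j) (l j)) ->
  is_series (fun n => sum_first (fun j => f j n) N) (sum_first l N).
Proof.
  intros H. induction N; simpl; [apply is_series_zero|]. exact (is_series_plus _ _ _ _ IHN (H N)).
Qed.

Lemma is_series_shift (a : nat -> R) (n : nat) (l : R) :
  (forall i, (i < n)%nat -> a i = 0) -> is_series (fun k => a (n + k)%nat) l -> is_series a l.
Proof.
  intros H Hs. apply is_series_lim, (proj2 (is_lim_seq_incr_n _ n _)).
  apply (is_lim_seq_ext (sum_n (fun k => a (n + k)%nat))); [|exact Hs].
  intros k. rewrite !sum_n_sum_first. replace (S (k + n)) with (n + S k)%nat by lia.
  rewrite sum_first_add, (sum_first_zero a n H). lra.
Qed.

Lemma is_series_le (a b : nat -> R) (la lb : R) :
  (forall n, a n <= b n) -> is_series a la -> is_series b lb -> la <= lb.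
Proof.
  intros H Ha Hb.
  apply (is_lim_seq_le (sum_n a) (sum_n b) la lb); auto.
  intros n. rewrite !sum_n_sum_first. apply sum_first_le; auto.
Qed.

Lemma is_series_le_bound (a : nat -> R) (l M : R) :
  is_series a l -> (forall n, sum_first a n <= M) -> l <= M.
Proof.
  intros Ha H.
  apply (is_lim_seq_le (sum_n a) (fun _ => M) l M); auto; [|apply is_lim_seq_const].
  intros n. rewrite sum_n_sum_first. apply H.
Qed.

Lemma is_series_partial_le (a : nat -> R) (l : R) (n : nat) :
  (forall i, 0 <= a i) -> is_series a l -> sum_first a n <= l.
Proof.
  intros H Ha. apply (is_lim_seq_incr_compare _ l (is_series_sum_first_lim a l Ha)).
  intros m. simpl. specialize (H m). lra.
Qed.

Lemma is_series_term_le (a : nat -> R) (l : R) (n : nat) :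
  (forall i, 0 <= a i) -> is_series a l -> a n <= l.
Proof.
  intros H Ha. pose proof (is_series_partial_le a l (S n) H Ha). simpl in *.
  pose proof (sum_first_nonneg a n H). lra.
Qed.

Lemma is_series_ge0 (a : nat -> R) (l : R) : (forall i, 0 <= a i) -> is_series a l -> 0 <= l.
Proof. intros H Ha. pose proof (is_series_term_le a l 0 H Ha). specialize (H 0%nat). lra. Qed.

Lemma is_series_nonneg_lub (a : nat -> R) (l : R) : (forall j, 0 <= a j) ->
  (forall n, sum_first a n <= l) -> (forall M, (forall n, sum_first a n <= M) -> l <= M) ->
  is_series a l.
Proof.
  intros Ha Hub Hlub.
  assert (Hinc : forall n, sum_n a n <= sum_n a (S n)).
  { intros n. rewrite !sum_n_sum_first. simpl. specialize (Ha (S n)). lra. }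
  destruct (ex_finite_lim_seq_incr (sum_n a) l Hinc) as [L HL].
  { intros n. rewrite sum_n_sum_first. apply Hub. }
  assert (HLl : L <= l) by (apply (is_series_le_bound a); auto).
  assert (HlL : l <= L).
  { apply Hlub. intros [|n]; [simpl; apply (is_series_ge0 a); auto|].
    rewrite <- sum_n_sum_first. apply (is_lim_seq_incr_compare _ L HL Hinc). }
  replace l with L by lra. exact HL.
Qed.

Lemma is_series_swap_nonneg (a : nat -> nat -> R) (B : nat -> R) (l : R) :
  (forall i j, 0 <= a i j) -> (forall i, is_series (a i) (B i)) -> is_series B l ->
  (forall j, ex_series (fun i => a i j)) /\ is_series (fun j => Series (fun i => a i j)) l.
Proof.
  intros Ha Hrow HB.
  assert (Hcol : forall j, ex_series (fun i => a i j)).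
  { intros j. apply (ex_series_le (fun i => a i j) B); [|exists l; exact HB].
    intros i. unfold norm; simpl. unfold abs; simpl. rewrite Rabs_pos_eq by auto.
    apply (is_series_term_le (a i)); auto. }
  split; [exact Hcol|].
  set (A := fun j => Series (fun i => a i j)).
  assert (HA : forall j, is_series (fun i => a i j) (A j)) by (intros; apply Series_correct; auto).
  assert (Hpart : forall J, is_series (fun i => sum_first (a i) J) (sum_first A J)).
  { intros J. exact (is_series_sum_first (fun j i => a i j) A J HA). }
  apply is_series_nonneg_lub.
  - intros j. apply (is_series_ge0 (fun i => a i j)); auto.
  - intros J. apply (is_series_le _ B _ l (fun i => is_series_partial_le (a i) _ J (Ha i) (Hrow i))
      (Hpart J) HB).
  - intros M HM. apply (is_series_le_bound B); auto. intros I.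
    apply (is_lim_seq_le (fun J => sum_first (fun i => sum_first (a i) J) I) (fun _ => M)
      (sum_first B I) M); [| |apply is_lim_seq_const].
    + intros J. rewrite sum_first_swap. eapply Rle_trans; [|apply (HM J)].
      apply sum_first_le. intros j. apply (is_series_partial_le (fun i => a i j)); auto.
    + induction I as [|I IH]; simpl; [apply is_lim_seq_const|].
      apply is_lim_seq_plus'; [exact IH|]. apply is_series_sum_first_lim, Hrow.
Qed.

(* Monotone convergence for series: Tonelli applied to the increments [u (N+1) - u N]. *)
Lemma is_series_monotone_lim (u : nat -> nat -> R) (phi : nat -> R) (l : R) :
  (forall r, u 0%nat r = 0) -> (forall N r, u N r <= u (S N) r) ->
  (forall N, is_series (u N) (sum_first phi N)) -> is_series phi l ->
  exists U : nat -> R, (forall r, is_lim_seq (fun N => u N r) (U r)) /\ is_series U l.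
Proof.
  intros H0 Hmono Hu Hphi.
  set (a := fun N r => u (S N) r - u N r).
  assert (Hpos : forall N r, 0 <= a N r) by (intros N r; unfold a; specialize (Hmono N r); lra).
  assert (Hrow : forall N, is_series (a N) (phi N)).
  { intros N. replace (phi N) with (sum_first phi (S N) - sum_first phi N) by (simpl; ring).
    exact (is_series_minus _ _ _ _ (Hu (S N)) (Hu N)). }
  destruct (is_series_swap_nonneg a _ _ Hpos Hrow Hphi) as [Hcol Hsum].
  eexists; split; [|exact Hsum]. intros r.
  apply is_lim_seq_incr_1, (is_lim_seq_ext (sum_n (fun N => a N r))).
  - intros M. rewrite sum_n_sum_first. unfold a.
    rewrite (sum_first_telescope (fun N => u N r)), H0. ring.
  - apply Series_correct, Hcol.
Qed.

(** * Uniqueness of power series coefficients *)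

Lemma continuity_pt_vanish_right (f : R -> R) (rho : R) : 0 < rho ->
  continuity_pt f 0 -> (forall t, 0 < t < rho -> f t = 0) -> f 0 = 0.
Proof.
  intros Hrho Hf H0.
  set (u := fun m => rho / 2 * (1 / 2) ^ m).
  assert (Hu : is_lim_seq u 0).
  { replace (Finite 0) with (Rbar_mult (rho / 2) 0) by (simpl; f_equal; ring).
    apply is_lim_seq_scal_l, is_lim_seq_geom. rewrite Rabs_pos_eq; lra. }
  assert (Hfu : is_lim_seq (fun m => f (u m)) 0).
  { apply (is_lim_seq_ext (fun _ => 0)); [|apply is_lim_seq_const].
    intros m. symmetry. apply H0. unfold u.
    pose proof (pow_lt (1 / 2) m ltac:(lra)). pose proof (pow_le1 (1 / 2) m ltac:(lra)).
    split; nra. }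
  pose proof (is_lim_seq_unique _ _ (is_lim_seq_continuous f u 0 Hf Hu)) as E1.
  pose proof (is_lim_seq_unique _ _ Hfu) as E2.
  rewrite E1 in E2. now injection E2.
Qed.

Lemma CV_radius_decr_n (c : nat -> R) (n : nat) : CV_radius (PS_decr_n c n) = CV_radius c.
Proof.
  induction n as [|n IH]; [apply CV_radius_ext; reflexivity|].
  rewrite <- IH, <- (CV_radius_decr_1 (PS_decr_n c n)).
  apply CV_radius_ext. intros k. unfold PS_decr_n, PS_decr_1. f_equal. lia.
Qed.

Lemma PSeries_vanish_right_coef (c : nat -> R) (rho : R) : 0 < rho ->
  Rbar_lt 0 (CV_radius c) -> (forall t, 0 < t < rho -> PSeries c t = 0) -> forall n, c n = 0.
Proof.
  intros Hrho Hc H0.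
  enough (Hall : forall n k, (k < n)%nat -> c k = 0) by (intros n; apply (Hall (S n)); lia).
  intros n; induction n as [|n IH]; intros k Hk; [lia|].
  destruct (Nat.lt_ge_cases k n) as [Hkn|Hkn]; [now apply IH|].
  replace k with n by lia.
  replace (c n) with (PSeries (PS_decr_n c n) 0)
    by (rewrite PSeries_0; unfold PS_decr_n; f_equal; lia).
  apply (continuity_pt_vanish_right _ rho Hrho).
  - apply PSeries_continuity. rewrite CV_radius_decr_n, Rabs_R0. exact Hc.
  - intros t Ht. pose proof (PSeries_decr_n_aux c n t IH) as E.
    rewrite H0 in E by exact Ht.
    destruct (Rmult_integral _ _ (eq_sym E)) as [Et|Et]; [|exact Et].
    exfalso. apply (pow_nonzero t n); lra.
Qed.

Lemma is_series_pow_coef_unique (L1 L2 : nat -> R) (f : R -> R) :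
  (forall r, 0 <= L1 r) -> (forall r, 0 <= L2 r) ->
  (forall t, 0 < t < 1 ->
    is_series (fun r => t ^ r * L1 r) (f t) /\ is_series (fun r => t ^ r * L2 r) (f t)) ->
  forall r, L1 r = L2 r.
Proof.
  intros H1 H2 H r.
  set (c := fun r => L1 r - L2 r).
  assert (Hc : forall t, 0 < t < 1 -> is_pseries c t 0).
  { intros t Ht. destruct (H t Ht) as [Ha Hb]. apply is_pseries_R.
    replace 0 with (f t - f t) by ring.
    apply (is_series_ext_R (fun r => t ^ r * L1 r - t ^ r * L2 r));
      [|exact (is_series_minus _ _ _ _ Ha Hb)].
    intros n. unfold c. ring. }
  assert (Hrad : Rbar_lt 0 (CV_radius c)).
  { apply (Rbar_lt_le_trans _ (1 / 2)); [simpl; lra|].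
    apply (proj1 (CV_radius_bounded c)). exists (2 * f (1 / 2)). intros n.
    destruct (H (1 / 2) ltac:(lra)) as [Ha Hb].
    assert (Hpos : forall (L : nat -> R), (forall r, 0 <= L r) -> forall i, 0 <= (1 / 2) ^ i * L i)
      by (intros L HL i; apply Rmult_le_pos; [apply pow_le; lra|apply HL]).
    pose proof (is_series_term_le _ _ n (Hpos L1 H1) Ha).
    pose proof (is_series_term_le _ _ n (Hpos L2 H2) Hb).
    pose proof (Hpos L1 H1 n). pose proof (Hpos L2 H2 n).
    unfold c. rewrite Rmult_comm. apply Rabs_le. split; nra. }
  apply Rminus_diag_uniq. apply (PSeries_vanish_right_coef c 1 ltac:(lra) Hrad).
  intros t Ht. apply is_pseries_unique, Hc, Ht.
Qed.

(** * The q-kernel *)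

(* [qden q t k = [k]_q - t q^k] is the denominator of the geometric series
   [sum_(e >= 0) t^e q^(e k) / [k]_q^(e+1)]. *)
Definition qden (q t : R) (k : nat) : R := qint q k - t * q ^ k.

Definition qratio (q : R) (k : nat) : R := q ^ k / qint q k.

Fixpoint qden_prod (q t : R) (n : nat) : R :=
  match n with O => 1 | S m => qden_prod q t m * qden q t (S m) end.

(* At [t = 0] this is [q^(m l) [m]_q! [l]_q! / [m + l]_q!], i.e. [q^(m l)] divided by a
   q-binomial coefficient. *)
Definition qkernel (q t : R) (m l : nat) : R :=
  q ^ (m * l) * qden_prod q t m * qden_prod q t l / qden_prod q t (m + l).

(* [qden_msum q t d M] is the sum over [M > j_1 > ... > j_d >= 0] of the products
   of the [/ qden q t (j_i + 1)]. *)
Fixpoint qden_msum (q t : R) (d M : nat) : R :=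
  match d with
  | O => 1
  | S d' => sum_first (fun j => / qden q t (S j) * qden_msum q t d' j) M
  end.

Section QKernel.

Variables q t : R.
Hypothesis Hq : 0 < q < 1.
Hypothesis Ht : 0 <= t < 1.

Lemma pow_le_base (k : nat) : (1 <= k)%nat -> q ^ k <= q.
Proof.
  intros Hk. rewrite <- (pow_1 q) at 2. apply pow_le_pow_decr; [lra|exact Hk].
Qed.

Lemma qint_ge1 (k : nat) : (1 <= k)%nat -> 1 <= qint q k.
Proof.
  intros Hk. unfold qint. pose proof (pow_le_base k Hk).
  apply Rmult_le_reg_r with (1 - q); [lra|]. unfold Rdiv. rewrite Rmult_assoc, Rinv_l; lra.
Qed.

Lemma qint_add (m l : nat) : qint q (m + l) - q ^ l * qint q m = qint q l.
Proof. unfold qint. rewrite pow_add. field. lra. Qed.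

Lemma qden_ge (k : nat) : (1 <= k)%nat -> 1 - t <= qden q t k.
Proof.
  intros Hk. unfold qden. pose proof (qint_ge1 k Hk).
  pose proof (pow_le q k ltac:(lra)). pose proof (pow_le1 q k ltac:(lra)). nra.
Qed.

Lemma qden_pos (k : nat) : (1 <= k)%nat -> 0 < qden q t k.
Proof. intros Hk. pose proof (qden_ge k Hk). lra. Qed.

Lemma qden_add (m l : nat) : qden q t (m + l) - q ^ l * qden q t m = qint q l.
Proof. unfold qden. rewrite <- (qint_add m l), pow_add. ring. Qed.

Lemma qden_le_S (k : nat) : qden q t k <= qden q t (S k).
Proof.
  assert (E : qden q t (S k) - qden q t k = q ^ k * (1 + t * (1 - q))).
  { unfold qden, qint. simpl. field. lra. }
  pose proof (pow_le q k ltac:(lra)).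
  assert (0 <= q ^ k * (1 + t * (1 - q))) by (apply Rmult_le_pos; nra). lra.
Qed.

Lemma qden_mono (a b : nat) : (a <= b)%nat -> qden q t a <= qden q t b.
Proof.
  intros Hab. induction Hab; [lra|]. eapply Rle_trans; [apply IHHab|apply qden_le_S].
Qed.

Lemma qden_prod_pos (n : nat) : 0 < qden_prod q t n.
Proof.
  induction n; simpl; [lra|]. apply Rmult_lt_0_compat; [exact IHn|apply qden_pos; lia].
Qed.

Lemma qratio_pos (k : nat) : (1 <= k)%nat -> 0 < qratio q k.
Proof.
  intros Hk. pose proof (qint_ge1 k Hk). apply Rdiv_lt_0_compat; [apply pow_lt|]; lra.
Qed.

Lemma qratio_le (k : nat) : (1 <= k)%nat -> qratio q k <= q ^ k.
Proof.
  intros Hk. unfold qratio. pose proof (qint_ge1 k Hk). pose proof (pow_lt q k ltac:(lra)).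
  apply Rmult_le_reg_r with (qint q k); [lra|]. unfold Rdiv. rewrite Rmult_assoc, Rinv_l; nra.
Qed.

Lemma qkernel_ge0 (m l : nat) : 0 <= qkernel q t m l.
Proof.
  unfold qkernel. pose proof (qden_prod_pos m). pose proof (qden_prod_pos l).
  pose proof (qden_prod_pos (m + l)). pose proof (pow_le q (m * l) ltac:(lra)).
  apply Rdiv_le_0_compat; [|lra]. apply Rmult_le_pos; [apply Rmult_le_pos|]; lra.
Qed.

Lemma qkernel_sym (m l : nat) : qkernel q t m l = qkernel q t l m.
Proof.
  unfold qkernel. rewrite Nat.mul_comm, Nat.add_comm. unfold Rdiv. ring.
Qed.

Lemma qkernel_0l (l : nat) : qkernel q t 0 l = 1.
Proof. unfold qkernel. simpl. pose proof (qden_prod_pos l). field. lra. Qed.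

Lemma qkernel_Sl (m l : nat) :
  qkernel q t (S m) l = qkernel q t m l * q ^ l * qden q t (S m) / qden q t (S (m + l)).
Proof.
  unfold qkernel. simpl qden_prod. replace (S m * l)%nat with (l + m * l)%nat by lia.
  rewrite pow_add. simpl qden_prod.
  pose proof (qden_prod_pos (m + l)). pose proof (qden_pos (S (m + l)) ltac:(lia)).
  field. lra.
Qed.

(* The identity [qden (m + 1 + l) - q^l qden (m + 1) = [l]_q] makes the sum over [m]
   of [qkernel (m + 1) l / qden (m + 1)] telescope. *)
Lemma qkernel_telescope (m l : nat) : (1 <= l)%nat ->
  qkernel q t (S m) l / qden q t (S m) = qratio q l * (qkernel q t m l - qkernel q t (S m) l).
Proof.
  intros Hl. rewrite qkernel_Sl.
  pose proof (qden_add (S m) l) as E. replace (S m + l)%nat with (S (m + l)) in E by lia.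
  unfold qratio. pose proof (qint_ge1 l Hl).
  pose proof (qden_pos (S (m + l)) ltac:(lia)). pose proof (qden_pos (S m) ltac:(lia)).
  rewrite <- E. field. split; lra.
Qed.

Lemma qkernel_Sl_le (m l : nat) : (1 <= l)%nat -> qkernel q t (S m) l <= q * qkernel q t m l.
Proof.
  intros Hl. rewrite qkernel_Sl.
  pose proof (qkernel_ge0 m l). pose proof (pow_le_base l Hl). pose proof (pow_le q l ltac:(lra)).
  pose proof (qden_pos (S (m + l)) ltac:(lia)). pose proof (qden_pos (S m) ltac:(lia)).
  pose proof (qden_mono (S m) (S (m + l)) ltac:(lia)).
  assert (Hr : 0 <= qden q t (S m) / qden q t (S (m + l)) <= 1).
  { split; [apply Rdiv_le_0_compat; lra|].
    apply Rmult_le_reg_r with (qden q t (S (m + l))); [lra|].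
    unfold Rdiv. rewrite Rmult_assoc, Rinv_l; lra. }
  replace (qkernel q t m l * q ^ l * qden q t (S m) / qden q t (S (m + l)))
    with (qkernel q t m l * (q ^ l * (qden q t (S m) / qden q t (S (m + l)))))
    by (unfold Rdiv; ring).
  rewrite (Rmult_comm q). apply Rmult_le_compat_l; [exact H|]. nra.
Qed.

Lemma qkernel_le_pow (m l : nat) : (1 <= l)%nat -> qkernel q t m l <= q ^ m.
Proof.
  intros Hl. induction m as [|m IH]; [rewrite qkernel_0l; simpl; lra|].
  eapply Rle_trans; [apply qkernel_Sl_le, Hl|]. simpl. apply Rmult_le_compat_l; lra.
Qed.

Lemma is_series_qkernel (K l : nat) : (1 <= l)%nat ->
  is_series (fun i => qkernel q t (S (K + i)) l / qden q t (S (K + i)))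
    (qratio q l * qkernel q t K l).
Proof.
  intros Hl. apply is_series_lim.
  apply (is_lim_seq_ext (fun n => qratio q l * (qkernel q t K l - qkernel q t (S (K + n)) l))).
  { intros n. rewrite sum_n_sum_first. induction n as [|n IH].
    - simpl. rewrite Nat.add_0_r, qkernel_telescope by exact Hl. lra.
    - change (sum_first ?f (S (S n))) with (sum_first f (S n) + f (S n)).
      rewrite <- IH, !Nat.add_succ_r, qkernel_telescope by exact Hl. ring. }
  replace (Finite (qratio q l * qkernel q t K l))
    with (Rbar_mult (qratio q l) (qkernel q t K l - 0)) by (simpl; f_equal; ring).
  apply is_lim_seq_scal_l, is_lim_seq_minus'; [apply is_lim_seq_const|].
  apply (is_lim_seq_le_le (fun _ => 0) _ (fun n => q ^ n));
    [|apply is_lim_seq_const|apply is_lim_seq_geom; rewrite Rabs_pos_eq; lra].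
  intros n. split; [apply qkernel_ge0|].
  eapply Rle_trans; [apply qkernel_le_pow, Hl|]. apply pow_le_pow_decr; [lra|lia].
Qed.

Lemma qden_msum_ge0 (d M : nat) : 0 <= qden_msum q t d M.
Proof.
  revert M. induction d as [|d IH]; intros M; simpl; [lra|].
  apply sum_first_nonneg. intros i. apply Rmult_le_pos; [|apply IH].
  left. apply Rinv_0_lt_compat, qden_pos; auto; lia.
Qed.

Lemma is_series_qkernel_msum (d l : nat) : (1 <= l)%nat ->
  is_series (fun i => qkernel q t (S i) l / qden q t (S i) * qden_msum q t d i) (qratio q l ^ S d).
Proof.
  intros Hl. induction d as [|d IH].
  - apply (is_series_ext_R (fun i => qkernel q t (S (0 + i)) l / qden q t (S (0 + i))));
      [intros i; simpl; ring|].
    rewrite pow_1, <- (Rmult_1_r (qratio q l)), <- (qkernel_0l l).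
    apply is_series_qkernel; auto.
  - set (w := fun j => qden_msum q t d j / qden q t (S j)).
    set (a := fun j i => if (j <? i)%nat then w j * (qkernel q t (S i) l / qden q t (S i)) else 0).
    assert (Hw : forall j, 0 <= w j).
    { intros j. apply Rdiv_le_0_compat; [apply qden_msum_ge0|apply qden_pos; auto; lia]. }
    assert (Hpos : forall j i, 0 <= a j i).
    { intros j i. unfold a. destruct (j <? i)%nat; [|lra].
      apply Rmult_le_pos; [apply Hw|]. apply Rdiv_le_0_compat; [apply qkernel_ge0; auto|].
      apply qden_pos; auto; lia. }
    assert (Hrow : forall j, is_series (a j) (w j * (qratio q l * qkernel q t (S j) l))).
    { intros j. apply (is_series_shift _ (S j)).
      { intros i Hi. unfold a. destruct (Nat.ltb_spec j i); [lia|reflexivity]. }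
      apply (is_series_ext_R
        (fun i => w j * (qkernel q t (S (S j + i)) l / qden q t (S (S j + i)))));
        [intros i; unfold a; destruct (Nat.ltb_spec j (S j + i)); [reflexivity|lia]|].
      apply (is_series_Rmult_l (w j)), is_series_qkernel; auto. }
    assert (HB : is_series (fun j => w j * (qratio q l * qkernel q t (S j) l))
                   (qratio q l ^ S (S d))).
    { apply (is_series_ext_R
        (fun i => qratio q l * (qkernel q t (S i) l / qden q t (S i) * qden_msum q t d i)));
        [intros i; unfold w, Rdiv; ring|].
      apply (is_series_Rmult_l (qratio q l)), IH. }
    destruct (is_series_swap_nonneg a _ _ Hpos Hrow HB) as [_ Hcol].
    eapply is_series_ext_R; [|exact Hcol]. intros i. cbn beta.
    rewrite (is_series_unique _ (sum_first (fun j => a j i) i)).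
    2: { apply is_series_finite. intros j Hj. unfold a.
         destruct (Nat.ltb_spec j i); [lia|reflexivity]. }
    simpl qden_msum. rewrite <- sum_first_scal. apply sum_first_ext. intros j Hj.
    unfold a, w. destruct (Nat.ltb_spec j i); [|lia]. unfold Rdiv. ring.
Qed.

(* Two evaluations of the double series of [qkernel (i+1) (l+1)] (symmetric in [i, l])
   give the duality between the depth-one and the depth-[d] side. *)
Lemma is_series_qratio_msum (d : nat) (s : R) :
  is_series (fun l => qratio q (S l) ^ S d / qden q t (S l)) s ->
  is_series (fun i => qratio q (S i) * qden_msum q t d i / qden q t (S i)) s.
Proof.
  intros Hs.
  set (a := fun l i =>
    qkernel q t (S i) (S l) / qden q t (S i) * qden_msum q t d i / qden q t (S l)).
  assert (Hpos : forall l i, 0 <= a l i).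
  { intros l i. unfold a. pose proof (qden_msum_ge0 d i).
    pose proof (qden_pos (S l) ltac:(lia)). pose proof (qden_pos (S i) ltac:(lia)).
    pose proof (qkernel_ge0 (S i) (S l)).
    apply Rdiv_le_0_compat; [|lra]. apply Rmult_le_pos; [apply Rdiv_le_0_compat|]; lra. }
  assert (Hrow : forall l, is_series (a l) (qratio q (S l) ^ S d / qden q t (S l))).
  { intros l. replace (qratio q (S l) ^ S d / qden q t (S l))
      with (/ qden q t (S l) * qratio q (S l) ^ S d) by (unfold Rdiv; ring).
    apply (is_series_ext_R (fun i => / qden q t (S l) *
       (qkernel q t (S i) (S l) / qden q t (S i) * qden_msum q t d i)));
      [intros i; unfold a, Rdiv; ring|].
    apply is_series_Rmult_l, is_series_qkernel_msum; lia. }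
  destruct (is_series_swap_nonneg a _ _ Hpos Hrow Hs) as [_ Hcol].
  eapply is_series_ext_R; [|exact Hcol]. intros i. apply is_series_unique.
  apply (is_series_ext_R (fun l => qden_msum q t d i / qden q t (S i) *
      (qkernel q t (S (0 + l)) (S i) / qden q t (S (0 + l))))).
  { intros l. unfold a. rewrite (qkernel_sym (S i) (S l)). simpl. unfold Rdiv. ring. }
  replace (qratio q (S i) * qden_msum q t d i / qden q t (S i))
    with (qden_msum q t d i / qden q t (S i) * (qratio q (S i) * qkernel q t 0 (S i)))
    by (rewrite qkernel_0l by auto; unfold Rdiv; ring).
  apply is_series_Rmult_l, is_series_qkernel; auto; lia.
Qed.

Lemma ex_series_qratio_pow (n : nat) : (1 <= n)%nat ->
  ex_series (fun l => qratio q (S l) ^ n / qden q t (S l)).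
Proof.
  intros Hn.
  apply (@ex_series_le R_AbsRing R_CompleteNormedModule _ (fun l => / (1 - t) * q ^ l)).
  2: { apply (ex_series_scal_l (/ (1 - t)) (fun l => q ^ l)), ex_series_geom.
       rewrite Rabs_pos_eq; lra. }
  intros l. unfold norm; simpl; unfold abs; simpl.
  pose proof (qratio_pos (S l) ltac:(lia)) as Hx0.
  pose proof (qratio_le (S l) ltac:(lia)) as Hxq.
  pose proof (pow_le_pow_decr q l (S l) ltac:(lra) ltac:(lia)).
  pose proof (pow_le1 q l ltac:(lra)).
  pose proof (qden_ge (S l) ltac:(lia)).
  assert (Hxn : 0 <= qratio q (S l) ^ n <= qratio q (S l)).
  { split; [apply pow_le; lra|]. destruct n as [|n]; [lia|]. simpl.
    pose proof (pow_le1 (qratio q (S l)) n ltac:(lra)).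
    pose proof (pow_le (qratio q (S l)) n ltac:(lra)). nra. }
  rewrite Rabs_pos_eq by (apply Rdiv_le_0_compat; lra).
  unfold Rdiv. rewrite (Rmult_comm (/ (1 - t))). apply Rmult_le_compat; try lra.
  - left; apply Rinv_0_lt_compat; lra.
  - apply Rinv_le_contravar; lra.
Qed.

End QKernel.

(** * Sums over compositions *)

(* [comp_sum d m F] is the sum of [F s] over the lists [s] of [d] positive integers
   with sum [m]; the first entry is [S i] with [i < m]. *)
Fixpoint comp_sum (d m : nat) (F : list nat -> R) : R :=
  match d with
  | O => if (m =? 0)%nat then F [] else 0
  | S d' => sum_first (fun i => comp_sum d' (m - S i) (fun l => F (S i :: l))) m
  end.

Lemma comp_sum_ext (d m : nat) (F G : list nat -> R) :
  (forall l, F l = G l) -> comp_sum d m F = comp_sum d m G.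
Proof.
  revert m F G. induction d as [|d IH]; intros m F G H; simpl; [now rewrite H|].
  apply sum_first_ext. intros i _. apply IH. intros; apply H.
Qed.

Lemma comp_sum_plus (d m : nat) (F G : list nat -> R) :
  comp_sum d m (fun l => F l + G l) = comp_sum d m F + comp_sum d m G.
Proof.
  revert m F G. induction d as [|d IH]; intros m F G; simpl; [destruct (m =? 0)%nat; lra|].
  rewrite <- sum_first_plus. apply sum_first_ext. intros i _. apply IH.
Qed.

Lemma comp_sum_scal (d m : nat) (c : R) (F : list nat -> R) :
  comp_sum d m (fun l => c * F l) = c * comp_sum d m F.
Proof.
  revert m F. induction d as [|d IH]; intros m F; simpl; [destruct (m =? 0)%nat; lra|].
  rewrite <- sum_first_scal. apply sum_first_ext. intros i _. apply IH.
Qed.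

Lemma comp_sum_sum_first (d m N : nat) (G : nat -> list nat -> R) :
  comp_sum d m (fun l => sum_first (fun j => G j l) N) = sum_first (fun j => comp_sum d m (G j)) N.
Proof.
  induction N as [|N IH]; simpl.
  - rewrite (comp_sum_ext d m _ (fun _ => 0 * 0)) by (intros; ring).
    rewrite (comp_sum_scal d m 0 (fun _ => 0)). ring.
  - rewrite comp_sum_plus, IH. reflexivity.
Qed.

Lemma comp_sum_le (d m : nat) (F G : list nat -> R) :
  (forall l, F l <= G l) -> comp_sum d m F <= comp_sum d m G.
Proof.
  revert m F G. induction d as [|d IH]; intros m F G H; simpl.
  - destruct (m =? 0)%nat; [apply H|lra].
  - apply sum_first_le. intros i. apply IH. intros; apply H.
Qed.

Lemma comp_sum_nonneg (d m : nat) (F : list nat -> R) :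
  (forall l, 0 <= F l) -> 0 <= comp_sum d m F.
Proof.
  intros H. rewrite <- (Rmult_0_l (comp_sum d m F)), <- comp_sum_scal.
  apply comp_sum_le. intros l. specialize (H l). lra.
Qed.

Lemma comp_sum_lt (d m : nat) (F : list nat -> R) : (m < d)%nat -> comp_sum d m F = 0.
Proof.
  revert m F. induction d as [|d IH]; intros m F H; simpl; [lia|].
  apply sum_first_zero. intros i Hi. apply IH. lia.
Qed.

Lemma comp_sum_S (d r : nat) (F : list nat -> R) :
  comp_sum (S d) (S d + r) F =
  sum_first (fun e => comp_sum d (d + (r - e)) (fun l => F (S e :: l))) (S r).
Proof.
  change (comp_sum (S d) (S d + r) F)
    with (sum_first (fun i => comp_sum d (S d + r - S i) (fun l => F (S i :: l))) (S d + r)).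
  rewrite (sum_first_split_zero _ (S r)); [|lia|].
  - apply sum_first_ext. intros i Hi. f_equal. lia.
  - intros i Hi. apply comp_sum_lt. lia.
Qed.

Lemma comp_sum_1 (r : nat) (F : list nat -> R) : comp_sum 1 (S r) F = F [S r].
Proof.
  simpl comp_sum. rewrite (sum_first_zero (fun i => if (r - i =? 0)%nat then F [S i] else 0)).
  - rewrite Nat.sub_diag. simpl. lra.
  - intros i Hi. destruct (Nat.eqb_spec (r - i) 0); [lia|reflexivity].
Qed.

Definition lsum (F : list nat -> R) (L : list (list nat)) : R := fold_right Rplus 0 (map F L).

Lemma lsum_app (F : list nat -> R) (L1 L2 : list (list nat)) :
  lsum F (L1 ++ L2) = lsum F L1 + lsum F L2.
Proof. induction L1 as [|a L1 IH]; unfold lsum in *; simpl; [lra|]. rewrite IH. lra. Qed.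

Lemma lsum_map_cons (F : list nat -> R) (a : nat) (L : list (list nat)) :
  lsum F (map (cons a) L) = lsum (fun l => F (a :: l)) L.
Proof. induction L as [|x L IH]; unfold lsum in *; simpl; [reflexivity|]. now rewrite IH. Qed.

Lemma lsum_flat_map (F : list nat -> R) (P : list nat -> bool) (g : nat -> list (list nat))
    (L : list nat) :
  lsum F (filter P (flat_map g L)) = fold_right Rplus 0 (map (fun a => lsum F (filter P (g a))) L).
Proof.
  induction L as [|a L IH]; simpl; [reflexivity|]. now rewrite filter_app, lsum_app, IH.
Qed.

Lemma lsum_le (F G : list nat -> R) (L : list (list nat)) :
  (forall y, F y <= G y) -> lsum F L <= lsum G L.
Proof.
  intros H. induction L as [|a L IH]; unfold lsum in *; simpl; [lra|]. specialize (H a). lra.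
Qed.

Lemma lsum_ge0 (F : list nat -> R) (L : list (list nat)) :
  (forall y, 0 <= F y) -> 0 <= lsum F L.
Proof.
  intros H. induction L as [|a L IH]; unfold lsum in *; simpl; [lra|]. specialize (H a). lra.
Qed.

Lemma lsum_ge (F : list nat -> R) (L : list (list nat)) (x : list nat) :
  (forall y, 0 <= F y) -> In x L -> F x <= lsum F L.
Proof.
  intros H Hx. induction L as [|a L IH]; [destruct Hx|].
  pose proof (lsum_ge0 F L H). pose proof (H a). unfold lsum in *; simpl.
  destruct Hx as [<-|Hx]; [lra|]. specialize (IH Hx). lra.
Qed.

Lemma fold_right_Rplus_seq (h : nat -> R) (s K : nat) :
  fold_right Rplus 0 (map h (seq s K)) = sum_first (fun i => h (s + i)%nat) K.
Proof.
  revert s. induction K as [|K IH]; intros s; [reflexivity|].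
  cbn [seq map fold_right]. rewrite IH, sum_first_Sl, Nat.add_0_r. f_equal.
  apply sum_first_ext. intros i _. f_equal. lia.
Qed.

Lemma filter_sum_map_cons (a m : nat) (L : list (list nat)) :
  filter (fun l => (list_sum_nat l =? m)%nat) (map (cons a) L) =
  if (a <=? m)%nat then map (cons a) (filter (fun l => (list_sum_nat l =? m - a)%nat) L) else [].
Proof.
  unfold list_sum_nat. induction L as [|x L IH]; simpl; [now destruct (a <=? m)%nat|].
  rewrite IH. destruct (Nat.leb_spec a m);
    destruct (Nat.eqb_spec (a + fold_right Nat.add 0%nat x) m);
    destruct (Nat.eqb_spec (fold_right Nat.add 0%nat x) (m - a)); simpl; try lia; reflexivity.
Qed.

Lemma lsum_compositions (d m K : nat) (F : list nat -> R) : (m <= K)%nat ->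
  lsum F (filter (fun l => (list_sum_nat l =? m)%nat) (bounded_lists d K)) = comp_sum d m F.
Proof.
  revert m F. induction d as [|d IH]; intros m F HK.
  - simpl. destruct m; unfold lsum; simpl; lra.
  - simpl bounded_lists. rewrite lsum_flat_map, fold_right_Rplus_seq. simpl comp_sum.
    rewrite (sum_first_split_zero _ m K HK).
    + apply sum_first_ext. intros i Hi. rewrite filter_sum_map_cons.
      destruct (Nat.leb_spec (1 + i) m); [|lia].
      rewrite lsum_map_cons, IH by lia. reflexivity.
    + intros i Hi. rewrite filter_sum_map_cons.
      destruct (Nat.leb_spec (1 + i) m); [lia|reflexivity].
Qed.

Lemma is_lim_seq_lsum (G : list nat -> nat -> R) (L : list (list nat)) :
  (forall s, In s L -> ex_finite_lim_seq (G s)) ->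
  is_lim_seq (fun N => lsum (fun s => G s N) L) (lsum (fun s => real (Lim_seq (G s))) L).
Proof.
  induction L as [|a L IH]; intros H; unfold lsum in *; simpl; [apply is_lim_seq_const|].
  apply is_lim_seq_plus'.
  - apply Lim_seq_correct', H. now left.
  - apply IH. intros s Hs. apply H. now right.
Qed.

Lemma ex_finite_lim_seq_lsum_member (G : list nat -> nat -> R) (L : list (list nat))
    (x : list nat) (l : R) :
  (forall s N, 0 <= G s N) -> (forall s N, G s N <= G s (S N)) ->
  is_lim_seq (fun N => lsum (fun s => G s N) L) l -> In x L -> ex_finite_lim_seq (G x).
Proof.
  intros Hpos Hmono Hl Hx. apply (ex_finite_lim_seq_incr _ l (Hmono x)). intros N.
  apply (Rle_trans _ (lsum (fun s => G s N) L)); [apply (lsum_ge (fun s => G s N) L x); auto|].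
  apply (is_lim_seq_incr_compare _ l Hl). intros n. apply lsum_le. intros s. apply Hmono.
Qed.

(** * Generating functions of truncated q-zeta values *)

Definition bump_first_by (p : nat) (l : list nat) : list nat :=
  match l with [] => [] | a :: r => (a + p)%nat :: r end.

Lemma bump_first_by_0 (l : list nat) : bump_first_by 0 l = l.
Proof. destruct l; simpl; [reflexivity|]. now rewrite Nat.add_0_r. Qed.

Lemma bump_first_by_1 (l : list nat) : bump_first_by 1 l = bump_first l.
Proof. destruct l; simpl; [reflexivity|]. now rewrite Nat.add_1_r. Qed.

Lemma qzeta_trunc_cons (q : R) (s : nat) (l : list nat) (M : nat) :
  qzeta_trunc q (s :: l) M = sum_first (fun j => qterm q s (S j) * qzeta_trunc q l j) M.
Proof.
  destruct M as [|M]; simpl; [apply Rmult_0_r|].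
  rewrite sum_f_R0_sum_first, Nat.sub_0_r, Rmult_1_r. reflexivity.
Qed.

(* [comp_zeta_trunc q p d N r] is the sum of the truncations at [N] of
   [zeta[s_1 + p, s_2, ..., s_(d+1)]] over the compositions of [d + 1 + r] into [d + 1] parts. *)
Definition comp_zeta_trunc (q : R) (p d N r : nat) : R :=
  comp_sum (S d) (S d + r) (fun s => qzeta_trunc q (bump_first_by p s) N).

Definition comp_zeta (q : R) (p d r : nat) : R :=
  real (Lim_seq (fun N => comp_zeta_trunc q p d N r)).

Section GeneratingFunction.

Variable q : R.
Hypothesis Hq : 0 < q < 1.

Lemma qterm_ge0 (s k : nat) : (1 <= k)%nat -> 0 <= qterm q s k.
Proof.
  intros Hk. pose proof (qint_ge1 q Hq k Hk).
  apply Rdiv_le_0_compat; [apply pow_le|apply pow_lt]; lra.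
Qed.

Lemma qzeta_trunc_ge0 (s : list nat) (M : nat) : 0 <= qzeta_trunc q s M.
Proof.
  revert M. induction s as [|a s IH]; intros M; [simpl; lra|]. rewrite qzeta_trunc_cons.
  apply sum_first_nonneg. intros j. apply Rmult_le_pos; [apply qterm_ge0; lia|apply IH].
Qed.

Lemma qzeta_trunc_le_S (s : list nat) (M : nat) : qzeta_trunc q s M <= qzeta_trunc q s (S M).
Proof.
  destruct s as [|a s]; [simpl; lra|]. rewrite !qzeta_trunc_cons. simpl (sum_first _ (S M)).
  assert (0 <= qterm q a (S M) * qzeta_trunc q s M)
    by (apply Rmult_le_pos; [apply qterm_ge0; lia|apply qzeta_trunc_ge0]).
  lra.
Qed.

Lemma comp_zeta_trunc_ge0 (p d N r : nat) : 0 <= comp_zeta_trunc q p d N r.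
Proof. apply comp_sum_nonneg. intros; apply qzeta_trunc_ge0. Qed.

Lemma comp_zeta_trunc_le_S (p d N r : nat) :
  comp_zeta_trunc q p d N r <= comp_zeta_trunc q p d (S N) r.
Proof. apply comp_sum_le. intros; apply qzeta_trunc_le_S. Qed.

Lemma comp_zeta_trunc_0 (p d r : nat) : comp_zeta_trunc q p d 0 r = 0.
Proof.
  unfold comp_zeta_trunc. rewrite comp_sum_S. apply sum_first_zero. intros i _.
  rewrite (comp_sum_ext _ _ _ (fun _ => 0 * 0)), comp_sum_scal; [ring|].
  intros l. simpl. ring.
Qed.

Variable t : R.
Hypothesis Ht : 0 <= t < 1.

(* [sum_(e >= 0) t^e q^((e+p) k) / [k]_q^(e+p+1)] is a geometric series of ratio [t q^k / [k]_q]. *)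
Lemma is_series_qterm (p k : nat) : (1 <= k)%nat ->
  is_series (fun e => t ^ e * qterm q (S e + p) k) (qratio q k ^ p / qden q t k).
Proof.
  intros Hk. pose proof (qint_ge1 q Hq k Hk).
  pose proof (qratio_pos q Hq k Hk). pose proof (qratio_le q Hq k Hk).
  pose proof (pow_le1 q k ltac:(lra)).
  assert (Hg : is_series (fun e => (t * qratio q k) ^ e) (/ (1 - t * qratio q k))).
  { apply is_series_geom. rewrite Rabs_pos_eq by nra. nra. }
  pose proof (is_series_Rmult_l (/ qint q k * qratio q k ^ p) _ _ Hg) as Hs.
  replace (qratio q k ^ p / qden q t k) with (/ qint q k * qratio q k ^ p * / (1 - t * qratio q k)).
  - eapply is_series_ext_R; [|exact Hs]. intros e. unfold qterm, qratio.
    replace (S e + p - 1)%nat with (e + p)%nat by lia.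
    rewrite Nat.mul_comm, pow_mult. unfold Rdiv.
    rewrite !Rpow_mult_distr, !pow_inv, pow_add. replace (S e + p)%nat with (S (e + p)) by lia.
    simpl. rewrite pow_add. field. repeat split; try apply pow_nonzero; lra.
  - pose proof (qden_pos q t Hq Ht k Hk). unfold qden, qratio in *. field. split; lra.
Qed.

(* Peeling off the first entry of the compositions: the generating function in [t] is a
   Cauchy product with the geometric series of [is_series_qterm]. *)
Lemma is_series_comp_sum_cons (p d N : nat) :
  (forall M, is_series (fun r => t ^ r * comp_sum d (d + r) (fun l => qzeta_trunc q l M))
                       (qden_msum q t d M)) ->
  is_series
    (fun r => t ^ r * comp_sum (S d) (S d + r) (fun s => qzeta_trunc q (bump_first_by p s) N))
    (sum_first (fun j => qratio q (S j) ^ p / qden q t (S j) * qden_msum q t d j) N).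
Proof.
  intros IH.
  assert (Hj : forall j, is_series
     (fun r => sum_f_R0 (fun e => (t ^ e * qterm q (S e + p) (S j)) *
         (t ^ (r - e) * comp_sum d (d + (r - e)) (fun l => qzeta_trunc q l j))) r)
     (qratio q (S j) ^ p / qden q t (S j) * qden_msum q t d j)).
  { intros j. apply (is_series_mult_pos (fun e => t ^ e * qterm q (S e + p) (S j))
      (fun r => t ^ r * comp_sum d (d + r) (fun l => qzeta_trunc q l j)));
      [apply is_series_qterm; lia|apply IH| |];
      intros n; apply Rmult_le_pos; try (apply pow_le; lra).
    - apply qterm_ge0; lia.
    - apply comp_sum_nonneg. intros; apply qzeta_trunc_ge0. }
  eapply is_series_ext_R; [|exact (is_series_sum_first _ _ N Hj)]. intros r. cbv beta.
  rewrite comp_sum_S, <- sum_first_scal.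
  rewrite (sum_first_ext _ (fun j => sum_first (fun e => (t ^ e * qterm q (S e + p) (S j)) *
         (t ^ (r - e) * comp_sum d (d + (r - e)) (fun l => qzeta_trunc q l j))) (S r)) N)
    by (intros j _; apply sum_f_R0_sum_first).
  rewrite sum_first_swap. apply sum_first_ext. intros e He.
  rewrite (comp_sum_ext _ _ _
      (fun l => sum_first (fun j => qterm q (S e + p) (S j) * qzeta_trunc q l j) N))
    by (intros l; apply qzeta_trunc_cons).
  rewrite comp_sum_sum_first, <- sum_first_scal. apply sum_first_ext. intros j _.
  rewrite comp_sum_scal. replace (t ^ r) with (t ^ e * t ^ (r - e)); [ring|].
  rewrite <- pow_add. f_equal. lia.
Qed.

Lemma is_series_comp_sum_qzeta_trunc (d M : nat) :
  is_series (fun r => t ^ r * comp_sum d (d + r) (fun l => qzeta_trunc q l M)) (qden_msum q t d M).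
Proof.
  revert M. induction d as [|d IH]; intros M.
  - replace (qden_msum q t 0 M)
      with (sum_first (fun r => t ^ r * comp_sum 0 (0 + r) (fun l => qzeta_trunc q l M)) 1)
      by (simpl; ring).
    apply is_series_finite. intros [|j] Hj; [lia|]. simpl. ring.
  - replace (qden_msum q t (S d) M)
      with (sum_first (fun j => qratio q (S j) ^ 0 / qden q t (S j) * qden_msum q t d j) M)
      by (simpl; apply sum_first_ext; intros; unfold Rdiv; ring).
    eapply is_series_ext_R; [|apply (is_series_comp_sum_cons 0 d M IH)].
    intros r. cbv beta. f_equal. apply comp_sum_ext. intros l. now rewrite bump_first_by_0.
Qed.

End GeneratingFunction.

Lemma is_series_comp_zeta (q t : R) (p d : nat) (l : R) : 0 < q < 1 -> 0 < t < 1 ->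
  is_series (fun j => qratio q (S j) ^ p / qden q t (S j) * qden_msum q t d j) l ->
  (forall r, is_lim_seq (fun N => comp_zeta_trunc q p d N r) (comp_zeta q p d r)) /\
  is_series (fun r => t ^ r * comp_zeta q p d r) l.
Proof.
  intros Hq Ht Hl.
  set (u := fun N r => t ^ r * comp_zeta_trunc q p d N r).
  assert (Hu0 : forall r, u 0%nat r = 0) by (intros r; unfold u; rewrite comp_zeta_trunc_0; ring).
  assert (Hmono : forall N r, u N r <= u (S N) r).
  { intros N r. apply Rmult_le_compat_l; [apply pow_le; lra|apply comp_zeta_trunc_le_S, Hq]. }
  assert (Hu : forall N, is_series (u N)
      (sum_first (fun j => qratio q (S j) ^ p / qden q t (S j) * qden_msum q t d j) N)).
  { intros N. apply is_series_comp_sum_cons; [exact Hq|lra|].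
    intros M. apply is_series_comp_sum_qzeta_trunc; [exact Hq|lra]. }
  destruct (is_series_monotone_lim u _ _ Hu0 Hmono Hu Hl) as [U [HU HUl]].
  assert (Htr : forall r, 0 < t ^ r) by (intros r; apply pow_lt; lra).
  assert (Hlim : forall r, is_lim_seq (fun N => comp_zeta_trunc q p d N r) (/ t ^ r * U r)).
  { intros r. apply (is_lim_seq_ext (fun N => / t ^ r * (t ^ r * comp_zeta_trunc q p d N r))).
    - intros N. field. specialize (Htr r). lra.
    - apply (is_lim_seq_scal_l _ _ (U r)), HU. }
  assert (Hval : forall r, comp_zeta q p d r = / t ^ r * U r).
  { intros r. unfold comp_zeta. now rewrite (is_lim_seq_unique _ _ (Hlim r)). }
  split; [intros r; rewrite Hval; apply Hlim|].
  eapply is_series_ext_R; [|exact HUl]. intros r. rewrite Hval. field. specialize (Htr r). lra.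
Qed.

(** * The sum formula *)

Definition qratio_series (q t : R) (n : nat) : R :=
  Series (fun l => qratio q (S l) ^ n / qden q t (S l)).

Lemma comp_zeta_gen (q t : R) (d : nat) : 0 < q < 1 -> 0 < t < 1 ->
  ((forall r, is_lim_seq (fun N => comp_zeta_trunc q 1 d N r) (comp_zeta q 1 d r)) /\
   is_series (fun r => t ^ r * comp_zeta q 1 d r) (qratio_series q t (S d))) /\
  ((forall r, is_lim_seq (fun N => comp_zeta_trunc q (S d) 0 N r) (comp_zeta q (S d) 0 r)) /\
   is_series (fun r => t ^ r * comp_zeta q (S d) 0 r) (qratio_series q t (S d))).
Proof.
  intros Hq Ht. assert (Ht' : 0 <= t < 1) by lra.
  assert (Hs : is_series (fun l => qratio q (S l) ^ S d / qden q t (S l)) (qratio_series q t (S d)))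
    by (apply Series_correct, ex_series_qratio_pow; auto; lia).
  split; apply is_series_comp_zeta; auto.
  - eapply is_series_ext_R; [|exact (is_series_qratio_msum q t Hq Ht' d _ Hs)].
    intros j. unfold Rdiv. ring.
  - eapply is_series_ext_R; [|exact Hs]. intros j. simpl. ring.
Qed.

Lemma comp_zeta_duality (q : R) (d r : nat) :
  0 < q < 1 -> comp_zeta q 1 d r = comp_zeta q (S d) 0 r.
Proof.
  intros Hq. destruct (comp_zeta_gen q (1 / 2) d Hq ltac:(lra)) as [[Hcvg1 _] [Hcvg2 _]].
  assert (Hge0 : forall p d' r' (L : R),
             is_lim_seq (fun N => comp_zeta_trunc q p d' N r') L -> 0 <= L).
  { intros p d' r' L HL.
    apply (is_lim_seq_le (fun _ => 0) (fun N => comp_zeta_trunc q p d' N r') 0 L); auto.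
    - intros N. apply comp_zeta_trunc_ge0, Hq.
    - apply is_lim_seq_const. }
  apply (is_series_pow_coef_unique _ _ (fun t => qratio_series q t (S d))).
  - intros r'. exact (Hge0 _ _ _ _ (Hcvg1 r')).
  - intros r'. exact (Hge0 _ _ _ _ (Hcvg2 r')).
  - intros t Ht. destruct (comp_zeta_gen q t d Hq Ht) as [[_ H1] [_ H2]]. split; assumption.
Qed.

Lemma comp_zeta_trunc_compositions (q : R) (d N r : nat) :
  comp_zeta_trunc q 1 d N r =
  lsum (fun s => qzeta_trunc q (bump_first s) N) (compositions (S d) (S d + r)).
Proof.
  unfold compositions. rewrite lsum_compositions by lia. unfold comp_zeta_trunc.
  apply comp_sum_ext. intros l. now rewrite bump_first_by_1.
Qed.

Lemma comp_zeta_trunc_depth1 (q : R) (d N r : nat) :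
  comp_zeta_trunc q (S d) 0 N r = qzeta_trunc q [S (S d + r)] N.
Proof.
  unfold comp_zeta_trunc. replace (S 0 + r)%nat with (S r) by lia.
  rewrite comp_sum_1. simpl bump_first_by.
  do 3 f_equal. lia.
Qed.

Theorem corollary3p3 (q : R) (n k : nat) :
  0 < q < 1 -> (1 <= n)%nat -> (n <= k)%nat ->
  (forall s, In s (compositions n k) -> qzeta_converges q (bump_first s)) /\
  qzeta_converges q [S k] /\
  fold_right Rplus 0 (map (fun s => qzeta q (bump_first s)) (compositions n k))
    = qzeta q [S k].
Proof.
  intros Hq Hn Hnk. destruct n as [|d]; [lia|].
  destruct (Nat.le_exists_sub (S d) k Hnk) as [r [-> _]]. rewrite Nat.add_comm.
  destruct (comp_zeta_gen q (1 / 2) d Hq ltac:(lra)) as [[Hcvg1 _] [Hcvg2 _]].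
  assert (Hsum : is_lim_seq (fun N => lsum (fun s => qzeta_trunc q (bump_first s) N)
                   (compositions (S d) (S d + r))) (comp_zeta q 1 d r)).
  { eapply is_lim_seq_ext; [|apply Hcvg1]. intros N. apply comp_zeta_trunc_compositions. }
  assert (Hone : is_lim_seq (qzeta_trunc q [S (S d + r)]) (comp_zeta q (S d) 0 r)).
  { eapply is_lim_seq_ext; [|apply Hcvg2]. intros N. apply comp_zeta_trunc_depth1. }
  assert (Hconv : forall s, In s (compositions (S d) (S d + r)) ->
                            qzeta_converges q (bump_first s)).
  { intros s. apply (ex_finite_lim_seq_lsum_member (fun s => qzeta_trunc q (bump_first s)) _ _ _
      (fun s => qzeta_trunc_ge0 q Hq (bump_first s)) (fun s => qzeta_trunc_le_S q Hq (bump_first s))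
      Hsum). }
  split; [exact Hconv|split; [exists (comp_zeta q (S d) 0 r); exact Hone|]].
  unfold qzeta at 2. rewrite (is_lim_seq_unique _ _ Hone), <- comp_zeta_duality by exact Hq.
  pose proof (is_lim_seq_unique _ _ (is_lim_seq_lsum _ _ Hconv)) as E1.
  cbv beta in E1. rewrite (is_lim_seq_unique _ _ Hsum) in E1. now injection E1.
Qed.
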